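(* Let $(M,\nabla_0)$ be a hom-connection with respect to a differential graded algebra $\Omega A$, with extensions $\nabla_n:\mathrm{Hom}_A(\Omega^{n+1}A,M)\to\mathrm{Hom}_A(\Omega^nA,M)$, $\nabla_n(f)(\omega)=\nabla_0(f\omega)+(-1)^{n+1}f(d\omega)$. Then for all $n>0$: (a) $\nabla_{n-1}\circ\nabla_n:\mathrm{Hom}_A(\Omega^{n+1}A,M)\to\mathrm{Hom}_A(\Omega^{n-1}A,M)$ is right $A$-linear; (b) with $F=\nabla_0\circ\nabla_1:\mathrm{Hom}_A(\Omega^2A,M)\to M$ and $\Theta_n:\mathrm{Hom}_A(\Omega^{n+1}A,M)\to\mathrm{Hom}_A(\Omega^{n-1}A,\mathrm{Hom}_A(\Omega^2A,M))$ defined by $\Theta_n(f)(\omega_1)(\omega_2)=f(\omega_1\omega_2)$, one has $$\nabla_{n-1}\circ\nabla_n=\mathrm{Hom}_A(\Omega^{n-1}A,F)\circ\Theta_n,$$ i.e. $(\nabla_{n-1}\circ\nabla_n)(f)(\omega_1)=F(\Theta_n(f)(\omega_1))$ for all $f$ and $\omega_1\in\Omega^{n-1}A$.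
   Context: All algebras are associative and unital over a field $k$. $\Omega A=\bigoplus_{n\ge0}\Omega^nA$, $\Omega^0A=A$, is a differential graded algebra with degree-one differential $d$, $d^2=0$, satisfying the graded Leibniz rule. $M$ is a right $A$-module; $\mathrm{Hom}_A$ denotes right $A$-linear maps; $\mathrm{Hom}_A(\Omega^kA,M)$ is a right $A$-module via $(fa)(\omega)=f(a\omega)$, and $\mathrm{Hom}_A(A,M)\cong M$ via $f\mapsto f(1)$. For $\omega\in\Omega^nA$ and $f\in\mathrm{Hom}_A(\Omega^{n+m}A,M)$, $f\omega\in\mathrm{Hom}_A(\Omega^mA,M)$ is $(f\omega)(\omega')=f(\omega\omega')$. A hom-connection is a $k$-linear map $\nabla_0:\mathrm{Hom}_A(\Omega^1A,M)\to M$ with $\nabla_0(fa)=\nabla_0(f)a+f(da)$ for all $f$ and $a\in A$. *)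

From HB Require Import structures.
From mathcomp Require Import all_boot all_order all_algebra.
Set Implicit Arguments. Unset Strict Implicit. Unset Printing Implicit Defensive.
Import GRing.Theory.
Local Open Scope ring_scope.

(* Encoding: the DGA Omega A = (+)_n Omega^n A is a k-algebra T together with
   the family of homogeneous components Om n (k-subspaces of T), Om 0%N = A,
   and the differential d : T -> T. *)
Section Defs.
Variables (k : fieldType) (T : algType k) (Om : nat -> pred T) (d : T -> T).

Record is_dga : Prop := IsDGA {
  dga_zero : forall n, 0 \in Om n;
  dga_subspace : forall n (c : k) x y, x \in Om n -> y \in Om n -> c *: x + y \in Om n;
  dga_one : 1 \in Om 0%N;
  dga_mul : forall n m x y, x \in Om n -> y \in Om m -> x * y \in Om (n + m);
  dga_decomp : forall x, exists (N : nat) (s : nat -> T),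
      (forall i, s i \in Om i) /\ x = \sum_(i < N) s i;
  dga_direct : forall (N : nat) (s : nat -> T), (forall i, s i \in Om i) ->
      \sum_(i < N) s i = 0 -> forall i, (i < N)%N -> s i = 0;
  dga_d_lin : forall (c : k) x y, d (c *: x + y) = c *: d x + d y;
  dga_d_deg : forall n x, x \in Om n -> d x \in Om n.+1;
  dga_dd : forall x, d (d x) = 0;
  dga_leibniz : forall n m x y, x \in Om n -> y \in Om m ->
      d (x * y) = d x * y + (-1) ^+ n *: (x * d y)
}.

Variables (M : lmodType k) (act : M -> T -> M).

Record is_rmod : Prop := IsRmod {
  act_addl : forall m1 m2 a, a \in Om 0%N -> act (m1 + m2) a = act m1 a + act m2 a;
  act_addr : forall m a b, a \in Om 0%N -> b \in Om 0%N -> act m (a + b) = act m a + act m b;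
  act_mul : forall m a b, a \in Om 0%N -> b \in Om 0%N -> act (act m a) b = act m (a * b);
  act_one : forall m, act m 1 = m;
  act_scalel : forall (c : k) m a, a \in Om 0%N -> act (c *: m) a = c *: act m a;
  act_scaler : forall (c : k) m a, a \in Om 0%N -> act m (c *: a) = c *: act m a
}.

(* f : T -> M represents an element of Hom_A(Om^n A, M) (only its values on
   Om n matter). *)
Definition is_homA (n : nat) (f : T -> M) : Prop :=
  (forall x y, x \in Om n -> y \in Om n -> f (x + y) = f x + f y) /\
  (forall x a, x \in Om n -> a \in Om 0%N -> f (x * a) = act (f x) a).

Record is_hom_connection (nabla0 : (T -> M) -> M) : Prop := IsHomConn {
  hc_wd : forall f g, is_homA 1%N f -> is_homA 1%N g ->
      (forall x, x \in Om 1%N -> f x = g x) -> nabla0 f = nabla0 g;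
  hc_lin : forall (c : k) f g, is_homA 1%N f -> is_homA 1%N g ->
      nabla0 (fun w => c *: f w + g w) = c *: nabla0 f + nabla0 g;
  hc_leibniz : forall f a, is_homA 1%N f -> a \in Om 0%N ->
      nabla0 (fun w => f (a * w)) = act (nabla0 f) a + f (d a)
}.

Definition nabla_ext (nabla0 : (T -> M) -> M) (n : nat) (f : T -> M) : T -> M :=
  fun w => nabla0 (fun w' => f (w * w')) + (-1) ^+ n.+1 *: f (d w).

End Defs.

From HB Require Import structures.
From mathcomp Require Import all_boot all_order all_algebra.
From Stdlib Require Import FunctionalExtensionality.
Import GRing.Theory.
Local Open Scope ring_scope.
Set Implicit Arguments.
Unset Strict Implicit.

(* Everything rests on one identity: for [w] of degree [p] and [w'] of degree
   [q], the graded Leibniz rule gives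
     nabla_(p+q) f (w w') = (-1)^(p+q+1) f (dw w') + nabla_q (f w) w',
   the two signs on [f (w dw')] cancelling.  Applied inside
   nabla_(n-1) (nabla_n f) w with [q = 1], the term [f (dw w')] produces
   [nabla0 (f dw)] with one sign, the outer differential term produces it
   with the opposite sign (as [d (dw) = 0]), and what remains is
   [nabla0 (nabla_1 (f w))], i.e. part (b).  Right A-linearity (a) then
   follows from (b), since [w |-> f w] is right A-linear. *)

Section HomConnection.
Variables (k : fieldType) (T : algType k) (Om : nat -> pred T) (d : T -> T)
  (M : lmodType k) (act : M -> T -> M) (nabla0 : (T -> M) -> M).
Hypotheses (hdga : is_dga Om d) (hmod : is_rmod Om act)
  (hconn : is_hom_connection Om d act nabla0).

Local Notation homA := (is_homA Om act).
Local Notation nabla := (nabla_ext d nabla0).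

Lemma Om_add i x y : x \in Om i -> y \in Om i -> x + y \in Om i.
Proof. by move=> hx hy; have := dga_subspace hdga 1 hx hy; rewrite scale1r. Qed.

Lemma Om_scale i (c : k) x : x \in Om i -> c *: x \in Om i.
Proof. by move=> hx; have := dga_subspace hdga c hx (dga_zero hdga i); rewrite addr0. Qed.

Lemma d_add x y : d (x + y) = d x + d y.
Proof. by have := dga_d_lin hdga 1 x y; rewrite !scale1r. Qed.

Lemma homA0 i F : homA i F -> F 0 = 0.
Proof.
case=> hadd _; have := hadd 0 0 (dga_zero hdga i) (dga_zero hdga i).
by rewrite addr0 -{1}[F 0]addr0 => /addrI/esym.
Qed.

Lemma homAZ i F (c : k) x : homA i F -> x \in Om i -> F (c *: x) = c *: F x.
Proof.
case=> _ hmul hx; have h1 := dga_one hdga.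
have -> : c *: x = x * c%:A by rewrite -scalerAr mulr1.
by rewrite hmul ?Om_scale // (act_scaler hmod) // (act_one hmod).
Qed.

Lemma homA_lin i (c : k) F G : homA i F -> homA i G ->
  homA i (fun x => c *: F x + G x).
Proof.
case=> fadd fmul [gadd gmul]; split=> [x y hx hy | x a hx ha].
  by rewrite fadd // gadd // scalerDr addrACA.
by rewrite fmul // gmul // (act_addl hmod) // (act_scalel hmod).
Qed.

Lemma homA_add i F G : homA i F -> homA i G -> homA i (fun x => F x + G x).
Proof.
case=> fadd fmul [gadd gmul]; split=> [x y hx hy | x a hx ha].
  by rewrite fadd // gadd // addrACA.
by rewrite fmul // gmul // (act_addl hmod).
Qed.

Lemma homA_mull p q w F : w \in Om p -> homA (q + p) F ->
  homA q (fun u => F (w * u)).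
Proof.
move=> hw [hadd hmul]; have hwu u : u \in Om q -> w * u \in Om (q + p).
  by move=> hu; rewrite addnC (dga_mul hdga).
split=> [x y hx hy | x a hx ha]; first by rewrite mulrDr hadd ?hwu.
by rewrite mulrA hmul ?hwu.
Qed.

Lemma nabla0_add F G : homA 1 F -> homA 1 G ->
  nabla0 (fun x => F x + G x) = nabla0 F + nabla0 G.
Proof.
move=> hF hG; rewrite -[nabla0 F]scale1r -(hc_lin hconn) //.
by congr nabla0; apply: functional_extensionality => x; rewrite scale1r.
Qed.

Lemma nabla_ext_add n F G x : homA n.+1 F -> homA n.+1 G -> x \in Om n ->
  nabla n (fun y => F y + G y) x = nabla n F x + nabla n G x.
Proof.
move=> hF hG hx; rewrite /nabla_ext nabla0_add; last 2 first.
- exact: (homA_mull (q := 1) hx hF).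
- exact: (homA_mull (q := 1) hx hG).
by rewrite scalerDr addrACA.
Qed.

Lemma nabla_ext_homA n F : homA n.+1 F -> homA n (nabla n F).
Proof.
move=> hF; have hFx x : x \in Om n -> homA 1 (fun u => F (x * u)).
  by move=> hx; apply: (homA_mull (q := 1) hx hF).
have [hadd hmul] := hF.
split=> [x y hx hy | x a hx ha]; rewrite /nabla_ext.
  have hFxy u : u \in Om 1 -> F ((x + y) * u) = F (x * u) + F (y * u).
    by move=> hu; rewrite mulrDl hadd // -addn1 (dga_mul hdga).
  rewrite (hc_wd hconn (hFx _ (Om_add hx hy)) (homA_add (hFx x hx) (hFx y hy)) hFxy).
  rewrite d_add hadd ?(dga_d_deg hdga) // scalerDr nabla0_add;
    [by rewrite addrACA | exact: hFx..].
have hdxa : d x * a \in Om n.+1 by rewrite -[n.+1]addn0 (dga_mul hdga) ?(dga_d_deg hdga).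
have hxda : x * d a \in Om n.+1 by rewrite -addn1 (dga_mul hdga) ?(dga_d_deg hdga).
have -> : (fun u => F (x * a * u)) = (fun u => F (x * (a * u))).
  by apply: functional_extensionality => u; rewrite mulrA.
rewrite (hc_leibniz hconn (hFx x hx) ha) (dga_leibniz hdga hx ha).
rewrite hadd ?Om_scale // (homAZ _ hF) // (hmul (d x) a) ?(dga_d_deg hdga) //.
rewrite (act_addl hmod) // (act_scalel hmod) // exprS mulN1r !scaleNr.
(* the two copies of [F (x da)] cancel since [(-1)^(n+1) (-1)^n = -1] *)
by rewrite scalerDr signrZK opprD addrACA subrr addr0.
Qed.

Lemma nabla_ext_mull p q f w w' : homA (q + p).+1 f ->
  w \in Om p -> w' \in Om q ->
  nabla (q + p) f (w * w') =
  (-1) ^+ (q + p).+1 *: f (d w * w') + nabla q (fun u => f (w * u)) w'.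
Proof.
move=> hf hw hw'; have [hadd _] := hf.
have hdww : d w * w' \in Om (q + p).+1.
  by rewrite -addnS addnC (dga_mul hdga) ?(dga_d_deg hdga).
have hwdw : w * d w' \in Om (q + p).+1.
  by rewrite -addSn addnC (dga_mul hdga) ?(dga_d_deg hdga).
rewrite /nabla_ext (dga_leibniz hdga hw hw') hadd ?Om_scale // (homAZ _ hf) // scalerDr.
have -> : (-1) ^+ (q + p).+1 *: ((-1) ^+ p *: f (w * d w')) =
          (-1) ^+ q.+1 *: f (w * d w').
  by rewrite -[(q + p).+1]/(q.+1 + p) exprD -scalerA signrZK.
rewrite addrCA.
by congr (_ + (nabla0 _ + _)); apply: functional_extensionality => u; rewrite mulrA.
Qed.

Lemma nabla_ext_d n f w : homA n.+1 f ->
  nabla n f (d w) = nabla0 (fun u => f (d w * u)).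
Proof. by move=> hf; rewrite /nabla_ext (dga_dd hdga) (homA0 hf) scaler0 addr0. Qed.

Lemma nabla_ext_compE m f w : homA m.+2 f -> w \in Om m ->
  nabla m (nabla m.+1 f) w = nabla0 (nabla 1 (fun u => f (w * u))).
Proof.
move=> hf hw.
have hfw : homA 2 (fun u => f (w * u)) by exact: (homA_mull (q := 2) hw hf).
have hfdw : homA 1 (fun u => f (d w * u)).
  exact: (homA_mull (q := 1) (dga_d_deg hdga hw) hf).
have hNfw := nabla_ext_homA hfw.
have hG := homA_lin ((-1) ^+ m.+2) hfdw hNfw.
rewrite {1}/nabla_ext (hc_wd hconn _ hG); first last.
- by move=> u hu; exact: (nabla_ext_mull (q := 1) hf hw hu).
- exact: (homA_mull (q := 1) hw (nabla_ext_homA hf)).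
rewrite (hc_lin hconn) // nabla_ext_d //.
by rewrite exprS mulN1r scaleNr addrAC addNr add0r.
Qed.

Lemma nabla_ext_comp_add m f g w : homA m.+2 f -> homA m.+2 g -> w \in Om m ->
  nabla m (nabla m.+1 (fun x => f x + g x)) w =
  nabla m (nabla m.+1 f) w + nabla m (nabla m.+1 g) w.
Proof.
move=> hf hg hw; have hNw F : homA m.+2 F -> homA 1 (nabla 1 (fun u => F (w * u))).
  by move=> hF; apply/nabla_ext_homA/(homA_mull (q := 2) hw hF).
have hfg := homA_add hf hg.
rewrite !nabla_ext_compE // -(nabla0_add (hNw _ hf) (hNw _ hg)).
apply: (hc_wd hconn (hNw _ hfg) (homA_add (hNw _ hf) (hNw _ hg))) => x hx.
by apply: nabla_ext_add => //; apply: (homA_mull (q := 2) hw).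
Qed.

Lemma nabla_ext_comp_mull m f a w : homA m.+2 f -> a \in Om 0 -> w \in Om m ->
  nabla m (nabla m.+1 (fun x => f (a * x))) w = nabla m (nabla m.+1 f) (a * w).
Proof.
move=> hf ha hw; have haw : a * w \in Om m by rewrite -[m]add0n (dga_mul hdga).
rewrite !nabla_ext_compE //; last by apply: (homA_mull ha); rewrite addn0.
by congr (nabla0 (nabla 1 _)); apply: functional_extensionality => u; rewrite mulrA.
Qed.

End HomConnection.
Unset Implicit Arguments.

Theorem proposition3p3 (k : fieldType) (T : algType k) (Om : nat -> pred T)
  (d : T -> T) (M : lmodType k) (act : M -> T -> M) (nabla0 : (T -> M) -> M)
  (hdga : is_dga Om d) (hmod : is_rmod Om act)
  (hconn : is_hom_connection Om d act nabla0)
  (n : nat) (hn : (0 < n)%N) :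
  ((forall f g, is_homA Om act n.+1 f -> is_homA Om act n.+1 g ->
      forall w, w \in Om n.-1 ->
      nabla_ext d nabla0 n.-1 (nabla_ext d nabla0 n (fun x => f x + g x)) w =
      nabla_ext d nabla0 n.-1 (nabla_ext d nabla0 n f) w +
      nabla_ext d nabla0 n.-1 (nabla_ext d nabla0 n g) w) /\
   (forall f a, is_homA Om act n.+1 f -> a \in Om 0%N ->
      forall w, w \in Om n.-1 ->
      nabla_ext d nabla0 n.-1 (nabla_ext d nabla0 n (fun x => f (a * x))) w =
      nabla_ext d nabla0 n.-1 (nabla_ext d nabla0 n f) (a * w))) /\
  (forall f, is_homA Om act n.+1 f ->
      forall w1, w1 \in Om n.-1 ->
      nabla_ext d nabla0 n.-1 (nabla_ext d nabla0 n f) w1 =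
      nabla0 (nabla_ext d nabla0 1%N (fun w2 => f (w1 * w2)))).
Proof.
case: n hn => [//|m] _ /=.
have compE := nabla_ext_compE hdga hmod hconn.
have comp_add := nabla_ext_comp_add hdga hmod hconn.
have comp_mull := nabla_ext_comp_mull hdga hmod hconn.
by split; [split|] => *; [apply: comp_add | apply: comp_mull | apply: compE].
Qed.
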